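(* Let $E$ be a countable directed graph which is row-finite and has no sources, let $G$ be a discrete group acting on $E$ by graph automorphisms, and let $\varphi:G\times E^1\to G$ be a 1-cocycle with $\varphi(g,a)\cdot x=g\cdot x$ for all $g,a,x$. Then the following are equivalent: (1) for every $g\in G$ and every $x\in E^0$ there are only finitely many minimal strongly fixed paths for $g$ with range $x$; (2) the groupoid $\mathcal{G}_{\mathrm{tight}}^{(G,E)}$ is Hausdorff.
   Context: Conventions: paths $\alpha=\alpha_1\cdots\alpha_n$ with $s(\alpha_i)=r(\alpha_{i+1})$, $r(\alpha)=r(\alpha_1)$, $s(\alpha)=s(\alpha_n)$; row-finite without sources means $0<|r^{-1}(x)|<\infty$ for all vertices. 1-cocycle: $\varphi(gh,a)=\varphi(g,ha)\varphi(h,a)$; action and cocycle extend to finite paths by $g(a\alpha')=(ga)(\varphi(g,a)\alpha')$, $\varphi(g,a\alpha')=\varphi(\varphi(g,a),\alpha')$, and $\varphi(g,x)=g$ on vertices; $G$ acts on infinite paths analogously. A finite path $\alpha$ is strongly fixed by $g$ if $g\alpha=\alpha$ and $\varphi(g,\alpha)=1$; it is a minimal strongly fixed path for $g$ if moreover no proper prefix of $\alpha$ is strongly fixed by $g$. $\mathcal{G}_{\mathrm{tight}}^{(G,E)}$ is the groupoid of germs of the action of the inverse semigroup $\mathcal{S}_{G,E}=\{(\alpha,g,\beta):\alpha,\beta\in E^*,g\in G,s(\alpha)=g\,s(\beta)\}\cup\{0\}$ on its tight spectrum, which here is identified with the infinite path space $E^\infty$ (topology generated by cylinders $Z(\gamma)=\{\gamma\eta\}$),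 the action being $(\alpha,g,\beta)\cdot\beta\eta=\alpha(g\eta)$. Explicitly, its elements are germs $[\alpha,g,\beta;\xi]$ with $\xi\in Z(\beta)$, where $[s;\xi]=[t;\mu]$ iff $\xi=\mu$ and there is a nonzero idempotent $e=(\gamma,1,\gamma)$ with $e\cdot\xi=\xi$ and $se=te$ (products in $\mathcal{S}_{G,E}$: $(\alpha,g,\beta)(\gamma,h,\delta)$ equals $(\alpha,g\varphi(h,\varepsilon),\delta(h^{-1}\varepsilon))$ if $\beta=\gamma\varepsilon$, $(\alpha(g\varepsilon),\varphi(g,\varepsilon)h,\delta)$ if $\gamma=\beta\varepsilon$, $0$ otherwise); $s([\alpha,g,\beta;\beta\eta])=\beta\eta$, $r([\alpha,g,\beta;\beta\eta])=\alpha(g\eta)$; a basis of the topology is given by the sets $\{[\alpha,g,\beta;\xi]:\xi\in Z(\gamma)\}$. *)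

From HB Require Import structures.
From mathcomp Require Import all_boot.
From mathcomp Require Import boolp classical_sets cardinality.

Set Implicit Arguments.
Unset Strict Implicit.
Unset Printing Implicit Defensive.

Local Open Scope classical_set_scope.
Local Open Scope group_scope.

Section SelfSimilarGraph.
Variables (G : groupType) (V Ed : countType) (r s : Ed -> V).
Variables (actV : G -> V -> V) (actE : G -> Ed -> Ed) (phi : G -> Ed -> G).

Definition row_finite_no_sources : Prop :=
  forall x : V, finite_set [set e : Ed | r e = x] /\ [set e : Ed | r e = x] !=set0.

(* G acts on E by graph automorphisms (group actions on E^0 and E^1
   commuting with r and s; bijectivity follows from being group actions). *)
Definition graph_action : Prop :=
  (forall x, actV 1 x = x) /\
  (forall g h x, actV (g * h) x = actV g (actV h x)) /\
  (forall a, actE 1 a = a) /\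
  (forall g h a, actE (g * h) a = actE g (actE h a)) /\
  (forall g a, r (actE g a) = actV g (r a)) /\
  (forall g a, s (actE g a) = actV g (s a)).

Definition cocycle : Prop :=
  forall g h a, phi (g * h) a = phi g (actE h a) * phi h a.

Definition cocycle_vertex_cond : Prop :=
  forall g a x, actV (phi g a) x = actV g x.

(* A finite path is represented by its range vertex x and its list of edges
   [a1; ...; an] (n = 0 gives the vertex x itself), subject to
   r(a1) = x and s(a_i) = r(a_{i+1}). *)
Definition fpath := (V * seq Ed)%type.

Fixpoint chain (x : V) (l : seq Ed) : bool :=
  if l is a :: l' then (r a == x) && chain (s a) l' else true.

Definition ok_path (p : fpath) : bool := chain p.1 p.2.

Definition fp_r (p : fpath) : V := p.1.
Definition fp_s (p : fpath) : V := last p.1 (map s p.2).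
Definition fp_len (p : fpath) : nat := size p.2.

(* concatenation alpha beta (meaningful when s(alpha) = r(beta)) *)
Definition fp_cat (p q : fpath) : fpath := (p.1, p.2 ++ q.2).

Fixpoint act_seq (g : G) (l : seq Ed) : seq Ed :=
  if l is a :: l' then actE g a :: act_seq (phi g a) l' else [::].

Fixpoint phi_seq (g : G) (l : seq Ed) : G :=
  if l is a :: l' then phi_seq (phi g a) l' else g.

Definition act_path (g : G) (p : fpath) : fpath := (actV g p.1, act_seq g p.2).
Definition phi_path (g : G) (p : fpath) : G := phi_seq g p.2.

Definition strongly_fixed (g : G) (p : fpath) : Prop :=
  act_path g p = p /\ phi_path g p = 1.

Definition minimal_strongly_fixed (g : G) (p : fpath) : Prop :=
  ok_path p /\ strongly_fixed g p /\
  (forall k, (k < size p.2)%N -> ~ strongly_fixed g (p.1, take k p.2)).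

Definition ipath := nat -> Ed.

Definition ok_ipath (xi : ipath) : Prop := forall n, s (xi n) = r (xi n.+1).

Definition inZ (p : fpath) (xi : ipath) : Prop :=
  r (xi 0%N) = p.1 /\ forall i, (i < size p.2)%N -> xi i = nth (xi i) p.2 i.

(* action of g on an infinite path: (g eta)_n = g_n(eta_n), g_0 = g,
   g_{n+1} = phi(g_n, eta_n) *)
Definition act_ipath (g : G) (eta : ipath) : ipath :=
  fun n => actE (phi_seq g (mkseq eta n)) (eta n).

(* action of (alpha, g, beta) on beta eta : alpha (g eta) *)
Definition sact (a : fpath) (g : G) (b : fpath) (xi : ipath) : ipath :=
  let eta := fun n => xi (n + size b.2)%N in
  fun n => if (n < size a.2)%N then nth (xi n) a.2 n
           else act_ipath g eta (n - size a.2)%N.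

(* nonzero elements (alpha, g, beta); 0 is represented by None *)
Definition selem := (fpath * G * fpath)%type.

Definition ok_selem (t : selem) : Prop :=
  let: (a, g, b) := t in ok_path a /\ ok_path b /\ fp_s a = actV g (fp_s b).

Definition is_prefix (p q : fpath) : bool := (p.1 == q.1) && prefix p.2 q.2.

Definition smul (t u : selem) : option selem :=
  let: (a, g, b) := t in
  let: (c, h, d) := u in
  if is_prefix c b then
    let eps := (fp_s c, drop (size c.2) b.2) in
    Some (a, g * phi_path h eps, fp_cat d (act_path h^-1 eps))
  else if is_prefix b c then
    let eps := (fp_s b, drop (size b.2) c.2) in
    Some (fp_cat a (act_path g eps), phi_path g eps * h, d)
  else None.

(* a germ [alpha, g, beta; xi] is represented by the quadruple; germs are
   equivalence classes of valid quadruples under germ_eq *)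
Definition grep := (selem * ipath)%type.

Definition valid_grep (t : grep) : Prop :=
  ok_selem t.1 /\ ok_ipath t.2 /\ inZ t.1.2 t.2.

(* [s;xi] = [t;mu] iff xi = mu and there is a nonzero idempotent
   e = (gamma,1,gamma) with e xi = xi and s e = t e *)
Definition germ_eq (t u : grep) : Prop :=
  t.2 = u.2 /\
  exists gam : fpath, ok_path gam /\ inZ gam t.2 /\
    sact gam 1 gam t.2 = t.2 /\
    smul t.1 (gam, 1, gam) = smul u.1 (gam, 1, gam).

(* basic open set {[alpha, g, beta; xi] : xi in Z(gamma)}, as a saturated
   set of representatives *)
Definition basic_set (st : selem) (gam : fpath) : set grep :=
  [set t | valid_grep t /\
     exists xi : ipath, valid_grep (st, xi) /\ inZ gam xi /\ germ_eq t (st, xi)].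

Definition gopen (U : set grep) : Prop :=
  U `<=` valid_grep /\
  forall t, U t -> exists (st : selem) (gam : fpath),
      ok_selem st /\ ok_path gam /\ basic_set st gam t /\ basic_set st gam `<=` U.

Definition tight_groupoid_hausdorff : Prop :=
  forall t u : grep, valid_grep t -> valid_grep u -> ~ germ_eq t u ->
    exists U W : set grep, [/\ gopen U, gopen W, U t, W u & U `&` W = set0].

Definition finitely_many_minimal_strongly_fixed : Prop :=
  forall (g : G) (x : V),
    finite_set [set p : fpath | fp_r p = x /\ minimal_strongly_fixed g p].

End SelfSimilarGraph.

From Pilot Require Import Defs.
From mathcomp Require Import all_boot.
From mathcomp Require Import boolp classical_sets cardinality.
From mathcomp Require Import zify.

(* Two germs over the same infinite path xi are compared through their
   restrictions t (xi|q, 1, xi|q).  Past the lengths of the source paths, the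
   restriction of (a, g, b) only records a (g w) and the cocycle value phi(g, w),
   w the part of xi read so far; hence two germs over xi coincide iff, from some
   level M on, a segment of xi is strongly fixed by k = phi(h, w')^-1 phi(g, w).
   If only finitely many minimal strongly fixed paths for k start at r(xi_M),
   their lengths are bounded by some L, and a germ lying in both cylinder
   neighbourhoods of depth M + L + 1 would produce such a segment of xi itself:
   distinct germs are separated.  Conversely, infinitely many minimal strongly
   fixed paths for g at x yield, by Koenig's lemma (E is row-finite), an infinite
   path eta none of whose prefixes is strongly fixed although each extends to a
   strongly fixed path; the distinct germs [x, g, x; eta] and [x, 1, x; eta]
   then have no disjoint neighbourhoods. *)

Set Implicit Arguments.
Unset Strict Implicit.
Unset Printing Implicit Defensive.

Local Open Scope classical_set_scope.

Lemma finite_set_bounded (T : choiceType) (f : T -> nat) (A : set T) :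
  finite_set A -> exists L, forall x, A x -> f x <= L.
Proof.
case/finite_fsetP => X ->; exists (\max_(x <- finmap.enum_fset X) f x) => x Xx.
exact: leq_bigmax_seq.
Qed.

Section InfinitePaths.
Variables (V Ed : countType) (r s : Ed -> V).

Definition segment (z : ipath Ed) (i n : nat) : seq Ed := map z (iota i n).

Definition ipath_prefix (z : ipath Ed) (n : nat) : Defs.fpath V Ed :=
  (r (z 0), segment z 0 n).

Definition ipath_cons (a : Ed) (z : ipath Ed) : ipath Ed :=
  fun n => if n is k.+1 then z k else a.

Lemma size_segment z i n : size (segment z i n) = n.
Proof. by rewrite size_map size_iota. Qed.

Lemma nth_segment e z i n k : k < n -> nth e (segment z i n) k = z (i + k).
Proof. by move=> kn; rewrite (nth_map 0) ?size_iota // nth_iota. Qed.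

Lemma take_segment z i n j : j <= n -> take j (segment z i n) = segment z i j.
Proof. by move=> jn; rewrite /segment -map_take take_iota (minn_idPl jn). Qed.

Lemma segment0S z n : segment z 0 n.+1 = rcons (segment z 0 n) (z n).
Proof. exact: mkseqS. Qed.

Lemma segment_cat z i j k : i <= j -> j <= k ->
  segment z i (k - i) = segment z i (j - i) ++ segment z j (k - j).
Proof.
move=> ij jk; rewrite /segment -map_cat.
have -> : k - i = (j - i) + (k - j) by lia.
by rewrite iotaD subnKC.
Qed.

Lemma segment0_cat z n q : n <= q -> segment z 0 q = segment z 0 n ++ segment z n (q - n).
Proof. by move=> nq; have := segment_cat z (leq0n n) nq; rewrite !subn0. Qed.

Lemma segment_cons a z i n : segment (ipath_cons a z) i.+1 n = segment z i n.
Proof. by elim: n i => // n IH i; rewrite /segment /= -/(segment _ _ _) IH. Qed.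

Lemma eq_segment z z' i n :
  (forall k, k < i + n -> z k = z' k) -> segment z i n = segment z' i n.
Proof. by move=> E; apply/eq_in_map => k; rewrite mem_iota => /andP[_ /E]. Qed.

Lemma segment0_inj z z' n :
  segment z 0 n = segment z' 0 n -> forall i, i < n -> z i = z' i.
Proof. by move=> E i lt; rewrite -(add0n i) -!(nth_segment (z i) _ _ lt) E. Qed.

Lemma chain_cat x l1 l2 :
  chain r s x (l1 ++ l2) = chain r s x l1 && chain r s (last x (map s l1)) l2.
Proof. by elim: l1 x => //= a l1 IH x; rewrite IH andbA. Qed.

Lemma chain_segment z : ok_ipath r s z -> forall i n, chain r s (r (z i)) (segment z i n).
Proof. by move=> ok i n; elim: n i => // n IH i /=; rewrite eqxx ok IH. Qed.

Lemma ok_path_prefix z n : ok_ipath r s z -> ok_path r s (ipath_prefix z n).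
Proof. by move=> ok; apply: chain_segment. Qed.

Lemma ok_ipath_of_chain x z :
  (forall n, chain r s x (segment z 0 n)) -> ok_ipath r s z /\ r (z 0) = x.
Proof.
move=> ch; split; last by have /andP[/eqP] := ch 1.
move=> n; have := ch n.+2; rewrite (segment0_cat z (leqW (leqnSn n))) chain_cat.
have -> : n.+2 - n = 2 by lia.
by case/andP=> _ /= /and3P[_ /eqP -> _].
Qed.

Lemma inZ_prefix p z : inZ r p z -> p = ipath_prefix z (size p.2).
Proof.
case: p => x l [/= <- E]; congr pair; apply: (@eq_from_nth _ (z 0)).
  by rewrite size_segment.
by move=> i il; rewrite nth_segment // (set_nth_default (z i)) // -E.
Qed.

Lemma inZ_ipath_prefix z n : inZ r (ipath_prefix z n) z.
Proof. by split => //= i; rewrite size_segment => lt; rewrite nth_segment. Qed.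

Lemma inZ_ipath_prefix_agree z n z' :
  inZ r (ipath_prefix z n) z' -> forall i, i < n -> z' i = z i.
Proof.
move=> /inZ_prefix[_]; rewrite size_segment => E i lt.
by rewrite (segment0_inj E).
Qed.

Lemma inZ_eq p z z' : inZ r p z -> (forall i, i <= size p.2 -> z i = z' i) -> inZ r p z'.
Proof.
move=> /inZ_prefix Ep E; rewrite Ep /ipath_prefix E //.
rewrite (@eq_segment z z'); first exact: inZ_ipath_prefix.
by move=> k /ltnW; apply: E.
Qed.

Lemma extend_to_ipath : (forall x, [set e | r e = x] !=set0) ->
  forall p, ok_path r s p -> exists z, ok_ipath r s z /\ ipath_prefix z (size p.2) = p.
Proof.
move=> no_sources [x l]; rewrite /ok_path /=.
have [next nextP] : {next : V -> Ed & forall y, r (next y) = y}.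
  exact: (choice (P := fun y e => r e = y) no_sources).
elim: l x => [|a l IH] x /=.
  pose fix z n := if n is k.+1 then next (s (z k)) else next x.
  by exists z; split => [n|]; rewrite /ipath_prefix /= nextP.
case/andP => /eqP <- /IH [z [okz [z0 zl]]].
exists (ipath_cons a z); split; first by case=> [|n] //=; rewrite z0.
by rewrite /ipath_prefix /segment /= -/(segment _ _ _) segment_cons zl.
Qed.

Section Konig.
Hypothesis Hrf : row_finite_no_sources r.
Variables (x : V) (F : set (Defs.fpath V Ed)).
Hypothesis F_paths : forall p, F p -> p.1 = x /\ ok_path r s p.

Let extending (l : seq Ed) := [set p | F p /\ prefix l p.2].

Lemma extending_split l p : extending l p ->
  p = (x, l) \/ exists e rest, p.2 = rcons l e ++ rest /\ r e = last x (map s l).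
Proof.
case=> /F_paths[px okp] /prefixP[[|e rest] pl].
  by left; rewrite [p]surjective_pairing px pl cats0.
right; exists e, rest; rewrite cat_rcons; split=> //.
by move: okp; rewrite /ok_path pl px chain_cat => /andP[_ /andP[/eqP]].
Qed.

Lemma infinite_extending_rcons l :
  infinite_set (extending l) -> exists e, infinite_set (extending (rcons l e)).
Proof.
move=> infl; apply: contrapT => fin_rcons; apply: infl.
pose children := \bigcup_(e in [set e | r e = last x (map s l)]) extending (rcons l e).
apply: (@sub_finite_set _ _ ([set (x, l)] `|` children)).
  move=> p lp; case: (extending_split lp) => [-> | [e [rest [pl re]]]]; first by left.
  by right; exists e => //; split; [case: lp | apply/prefixP; exists rest].
rewrite finite_setU; split; first exact: finite_set1.
apply: bigcup_finite; first exact: (Hrf _).1.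
by move=> e _; apply: contrapT => infe; apply: fin_rcons; exists e.
Qed.

Lemma infinite_extending_long l :
  infinite_set (extending l) -> exists2 p, extending l p & size l < size p.2.
Proof.
move=> infl; apply: contrapT => no_long; apply: infl.
apply: (sub_finite_set _ (finite_set1 (x, l))) => p lp.
case: (extending_split lp) => [// | [e [rest [pl _]]]].
by case: no_long; exists p; rewrite // pl size_cat size_rcons addSn ltnS leq_addr.
Qed.

Lemma konig : infinite_set F -> exists z, [/\ ok_ipath r s z, r (z 0) = x &
  forall n, exists p, [/\ F p, n < size p.2 & take n p.2 = segment z 0 n]].
Proof.
move=> infF; have [e0 _] := (Hrf x).2.
have step l : exists e, infinite_set (extending l) -> infinite_set (extending (rcons l e)).
  case: (pselect (infinite_set (extending l))); last by exists e0.
  by case/infinite_extending_rcons => e infe; exists e.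
have [next nextP] := choice step.
pose walk n := iter n (fun l => rcons l (next l)) [::].
pose z n := next (walk n).
have walkE n : walk n = segment z 0 n.
  by elim: n => // n IH; rewrite segment0S -IH.
have inf_walk n : infinite_set (extending (segment z 0 n)).
  rewrite -walkE; elim: n => [|n IH]; last exact: nextP.
  by apply: sub_infinite_set infF => p Fp; split; rewrite ?prefix0s.
have long n : exists2 p, extending (segment z 0 n) p & n < size p.2.
  by have [p lp] := infinite_extending_long (inf_walk n); rewrite size_segment; exists p.
have [okz z0] : ok_ipath r s z /\ r (z 0) = x.
  apply: ok_ipath_of_chain => n; have [p [/F_paths[px okp] /prefixP[rest pl]] _] := long n.
  by move: okp; rewrite /ok_path pl px chain_cat => /andP[].
exists z; split=> // n; have [p [Fp /prefixP[rest pl]] lt] := long n.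
by exists p; split; rewrite // pl take_size_cat ?size_segment.
Qed.

End Konig.

End InfinitePaths.

Section TightGroupoid.
Variables (G : groupType) (V Ed : countType) (r s : Ed -> V).
Variables (actV : G -> V -> V) (actE : G -> Ed -> Ed) (phi : G -> Ed -> G).

Local Notation aseq := (act_seq actE phi).
Local Notation pseq := (phi_seq phi).
Local Notation sfixed := (strongly_fixed actV actE phi).
Local Notation msfixed := (minimal_strongly_fixed r s actV actE phi).

Hypothesis Hga : graph_action r s actV actE.
Hypothesis Hco : cocycle actE phi.

Lemma minimal_strongly_fixed_prefix k p : ok_path r s p -> sfixed k p ->
  exists2 j, j <= size p.2 & msfixed k (p.1, take j p.2).
Proof.
move=> okp sfp.
pose P j := `[< j <= size p.2 /\ sfixed k (p.1, take j p.2) >].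
have [|j /asboolP[jp sfj] jmin] := ex_minnP (ex_intro P (size p.2) _).
  by apply/asboolP; split; rewrite // take_size -surjective_pairing.
exists j => //; split.
  by move: okp; rewrite /ok_path -{1}(cat_take_drop j p.2) chain_cat => /andP[].
split=> // i /=; rewrite size_takel // => ij sfi.
have /jmin : P i by apply/asboolP; rewrite -(take_takel _ (ltnW ij)) (leq_trans (ltnW ij)).
by rewrite leqNgt ij.
Qed.

Section Cocycle.
Local Open Scope group_scope.

Lemma actV1 x : actV 1 x = x. Proof. by case: Hga. Qed.
Lemma actVM g h x : actV (g * h) x = actV g (actV h x). Proof. by case: Hga => _ []. Qed.
Lemma actE1 a : actE 1 a = a. Proof. by case: Hga => _ [_ []]. Qed.
Lemma actEM g h a : actE (g * h) a = actE g (actE h a).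
Proof. by case: Hga => _ [_ [_ []]]. Qed.
Lemma r_actE g a : r (actE g a) = actV g (r a). Proof. by case: Hga => _ [_ [_ [_ []]]]. Qed.

Lemma phi1 a : phi 1 a = 1.
Proof.
apply: (@mulgI _ (phi 1 a)); rewrite mulg1 -[in RHS](mulg1 1).
by rewrite Hco actE1.
Qed.

Lemma act_seq1 l : aseq 1 l = l.
Proof. by elim: l => //= a l IH; rewrite actE1 phi1 IH. Qed.

Lemma phi_seq1 l : pseq 1 l = 1.
Proof. by elim: l => //= a l IH; rewrite phi1. Qed.

Lemma size_act_seq g l : size (aseq g l) = size l.
Proof. by elim: l g => //= a l IH g; rewrite IH. Qed.

Lemma act_seq_cat g l1 l2 : aseq g (l1 ++ l2) = aseq g l1 ++ aseq (pseq g l1) l2.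
Proof. by elim: l1 g => //= a l1 IH g; rewrite IH. Qed.

Lemma phi_seq_cat g l1 l2 : pseq g (l1 ++ l2) = pseq (pseq g l1) l2.
Proof. by elim: l1 g => //= a l1 IH g; rewrite IH. Qed.

Lemma act_seqM g h l : aseq (g * h) l = aseq g (aseq h l).
Proof. by elim: l g h => //= a l IH g h; rewrite actEM Hco IH. Qed.

Lemma phi_seqM g h l : pseq (g * h) l = pseq g (aseq h l) * pseq h l.
Proof. by elim: l g h => //= a l IH g h; rewrite Hco IH. Qed.

Lemma eq_seqs_of_strongly_fixed g h y l :
  sfixed (h^-1 * g) (y, l) -> aseq g l = aseq h l /\ pseq g l = pseq h l.
Proof.
case=> [[_ fix_l] fix_phi]; have -> : g = h * (h^-1 * g) by rewrite mulVKg.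
by rewrite act_seqM phi_seqM fix_l; move: fix_phi; rewrite /phi_path /= => ->; rewrite mulg1.
Qed.

Lemma strongly_fixed_of_eq_seqs g h e l :
  aseq g (e :: l) = aseq h (e :: l) -> pseq g (e :: l) = pseq h (e :: l) ->
  sfixed (h^-1 * g) (r e, e :: l).
Proof.
move=> Ea Ep; split; last by rewrite /phi_path phi_seqM Ea Ep -phi_seqM mulVg phi_seq1.
rewrite /act_path act_seqM Ea -act_seqM mulVg act_seq1 /=; congr pair.
case: Ea => /(congr1 r); rewrite !r_actE => Er _.
by rewrite actVM Er -actVM mulVg actV1.
Qed.

End Cocycle.

Definition restrict (t : selem G V Ed) (z : ipath Ed) (q : nat) : option (selem G V Ed) :=
  smul s actV actE phi t (ipath_prefix r z q, 1%g, ipath_prefix r z q).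

Definition restrict_word (t : selem G V Ed) (z : ipath Ed) (q : nat) : seq Ed :=
  let: (a, g, b) := t in a.2 ++ aseq g (segment z (size b.2) (q - size b.2)).

Definition restrict_elt (t : selem G V Ed) (z : ipath Ed) (q : nat) : G :=
  let: (a, g, b) := t in pseq g (segment z (size b.2) (q - size b.2)).

Arguments restrict : simpl never.
Arguments restrict_word : simpl never.
Arguments restrict_elt : simpl never.

Lemma restrict_long a g b z q : inZ r b z -> size b.2 <= q ->
  restrict (a, g, b) z q =
  Some ((a.1, restrict_word (a, g, b) z q), restrict_elt (a, g, b) z q, ipath_prefix r z q).
Proof.
move=> /inZ_prefix ->; rewrite /restrict_word /restrict_elt /= size_segment.
move: (size b.2) => n nq; rewrite /restrict /ipath_prefix /smul /is_prefix /= eqxx /=.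
rewrite (segment0_cat z nq); case: (segment z n (q - n)) => [|e l].
  by rewrite cats0 prefix_refl drop_size /phi_path /fp_cat /act_path /= !cats0 mulg1; case: a.
have -> : prefix (segment z 0 n ++ e :: l) (segment z 0 n) = false.
  by apply/negbTE/negP => /size_prefix; rewrite size_cat /= -[X in _ <= X]addn0 leq_add2l.
by rewrite prefix_prefix drop_size_cat ?size_segment //= mulg1.
Qed.

Lemma restrict_short a g b z q : inZ r b z -> q < size b.2 ->
  restrict (a, g, b) z q = Some (a, g, b).
Proof.
move=> /inZ_prefix ->; rewrite /= size_segment; move: (size b.2) => n qn.
rewrite /restrict /ipath_prefix /smul /is_prefix /= eqxx /=.
rewrite (segment0_cat z (ltnW qn)) prefix_prefix drop_size_cat ?size_segment //=.
by rewrite invg1 /phi_path /fp_cat /act_path /= act_seq1 phi_seq1 mulg1.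
Qed.

Section RestrictCat.
Variables (a : Defs.fpath V Ed) (g : G) (b : Defs.fpath V Ed) (z : ipath Ed) (n m : nat).
Hypotheses (bn : size b.2 <= n) (nm : n <= m).

Lemma restrict_word_cat : restrict_word (a, g, b) z m =
  restrict_word (a, g, b) z n ++ aseq (restrict_elt (a, g, b) z n) (segment z n (m - n)).
Proof. by rewrite /restrict_word /restrict_elt /= (segment_cat z bn nm) act_seq_cat catA. Qed.

Lemma restrict_elt_cat :
  restrict_elt (a, g, b) z m = pseq (restrict_elt (a, g, b) z n) (segment z n (m - n)).
Proof. by rewrite /restrict_elt /= (segment_cat z bn nm) phi_seq_cat. Qed.

End RestrictCat.

Section RestrictLocal.
Variables (a : Defs.fpath V Ed) (g : G) (b : Defs.fpath V Ed) (z z' : ipath Ed) (n : nat).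
Hypotheses (bn : size b.2 <= n) (zz' : forall i, i < n -> z i = z' i).

Let eq_segment_tail : segment z (size b.2) (n - size b.2) = segment z' (size b.2) (n - size b.2).
Proof. by apply: eq_segment => k; rewrite subnKC //; apply: zz'. Qed.

Lemma eq_restrict_word : restrict_word (a, g, b) z n = restrict_word (a, g, b) z' n.
Proof. by rewrite /restrict_word /= eq_segment_tail. Qed.

Lemma eq_restrict_elt : restrict_elt (a, g, b) z n = restrict_elt (a, g, b) z' n.
Proof. by rewrite /restrict_elt /= eq_segment_tail. Qed.

End RestrictLocal.

Lemma eq_restrict t z z' q : r (z 0) = r (z' 0) -> (forall i, i < q -> z i = z' i) ->
  restrict t z q = restrict t z' q.
Proof. by move=> E0 E; rewrite /restrict /ipath_prefix E0 (@eq_segment _ z z'). Qed.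

Lemma restrict_eq_mono t u z p q : inZ r t.2 z -> inZ r u.2 z ->
  restrict t z p = restrict u z p -> p <= q -> restrict t z q = restrict u z q.
Proof.
case: t u => [[a g] b] [[c h] d] ib id E pq.
have size_prefix_neq (e : Defs.fpath V Ed) : p < size e.2 -> ipath_prefix r z p <> e.
  move=> lt /(congr1 (fun e => size e.2)) /=; rewrite size_segment => eq.
  by rewrite eq ltnn in lt.
case: (leqP (size b.2) p) => bp; case: (leqP (size d.2) p) => dp.
- move: E; rewrite !restrict_long ?(leq_trans bp) ?(leq_trans dp) //.
  rewrite (restrict_word_cat _ _ _ bp pq) (restrict_elt_cat _ _ _ bp pq).
  by rewrite (restrict_word_cat _ _ _ dp pq) (restrict_elt_cat _ _ _ dp pq) => -[-> -> ->].
- move: E; rewrite (restrict_long _ _ ib bp) (restrict_short _ _ id dp).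
  by case=> _ _ /(size_prefix_neq _ dp).
- move: E; rewrite (restrict_short _ _ ib bp) (restrict_long _ _ id dp).
  by case=> _ _ /esym /(size_prefix_neq _ bp).
- by move: E; rewrite (restrict_short _ _ ib bp) (restrict_short _ _ id dp) => -[-> -> ->].
Qed.

Lemma restrict_eq_split a g b c h d z M m :
  inZ r b z -> inZ r d z -> size b.2 <= M -> size d.2 <= M -> M <= m ->
  restrict (a, g, b) z m = restrict (c, h, d) z m <->
  [/\ a.1 = c.1, restrict_word (a, g, b) z M = restrict_word (c, h, d) z M,
      aseq (restrict_elt (a, g, b) z M) (segment z M (m - M)) =
      aseq (restrict_elt (c, h, d) z M) (segment z M (m - M)) &
      pseq (restrict_elt (a, g, b) z M) (segment z M (m - M)) =
      pseq (restrict_elt (c, h, d) z M) (segment z M (m - M))].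
Proof.
move=> ib id bM dM Mm.
rewrite !restrict_long ?(leq_trans bM) ?(leq_trans dM) //.
rewrite (restrict_word_cat _ _ _ bM Mm) (restrict_elt_cat _ _ _ bM Mm).
rewrite (restrict_word_cat _ _ _ dM Mm) (restrict_elt_cat _ _ _ dM Mm).
split=> [[e1 ew ep] | [-> -> -> ->] //].
have sz : size (restrict_word (a, g, b) z M) = size (restrict_word (c, h, d) z M).
  by move: (congr1 size ew); rewrite !size_cat !size_act_seq => /addIn.
by move/eqP: ew; rewrite eqseq_cat // => /andP[/eqP ? /eqP ?].
Qed.

Local Notation valid := (valid_grep r s actV).
Local Notation germ_equiv := (germ_eq r s actV actE phi).
Local Notation basic := (basic_set r s actV actE phi).
Local Notation open := (gopen r s actV actE phi).

Lemma sact_id gam z : inZ r gam z -> sact actE phi gam 1%g gam z = z.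
Proof.
move=> iz; apply: funext => n; rewrite /sact; case: ifPn => [nl | ].
  by case: gam iz nl => x l [_ E] /= nl; rewrite -E.
by rewrite -leqNgt /act_ipath phi_seq1 actE1 => /subnK ->.
Qed.

Lemma germ_eqP t u : valid t ->
  germ_equiv t u <-> t.2 = u.2 /\ exists q, restrict t.1 t.2 q = restrict u.1 t.2 q.
Proof.
case=> _ [okt _]; split=> [[tu [gam [_ [iz [_ E]]]]] | [tu [q E]]].
  by split=> //; exists (size gam.2); rewrite /restrict -(inZ_prefix iz).
split=> //; exists (ipath_prefix r t.2 q); split; first exact: ok_path_prefix.
split; first exact: inZ_ipath_prefix.
by split; [apply/sact_id/inZ_ipath_prefix | exact: E].
Qed.

Lemma germ_eq_refl t : valid t -> germ_equiv t t.
Proof. by move=> vt; apply/germ_eqP => //; split=> //; exists 0. Qed.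

Lemma germ_eq_sym t u : germ_equiv t u -> germ_equiv u t.
Proof. by case=> tu [gam [og [iz [sid E]]]]; split=> //; exists gam; rewrite -tu. Qed.

Lemma germ_eq_trans t u w : valid t -> valid u -> valid w ->
  germ_equiv t u -> germ_equiv u w -> germ_equiv t w.
Proof.
move=> vt vu vw /(germ_eqP _ vt)[tu [p Ep]] /(germ_eqP _ vu)[uw [q Eq]].
have iu : inZ r u.1.2 t.2 by rewrite tu; exact: vu.2.2.
have iw : inZ r w.1.2 t.2 by rewrite tu uw; exact: vw.2.2.
apply/germ_eqP => //; split; first by rewrite tu.
rewrite -tu in Eq; exists (maxn p q); rewrite (restrict_eq_mono vt.2.2 iu Ep (leq_maxl p q)).
exact: (restrict_eq_mono iu iw Eq (leq_maxr p q)).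
Qed.

Lemma basic_setE st gam v : basic st gam v <->
  [/\ valid v, valid (st, v.2), inZ r gam v.2 & germ_equiv v (st, v.2)].
Proof.
split=> [[vv [xi [vs [ig ge]]]] | [vv vs ig ge]]; last by split=> //; exists v.2.
by case: (ge) => /= vxi _; rewrite vxi.
Qed.

Lemma basic_set_germ_eq st gam v w :
  valid v -> germ_equiv v w -> basic st gam w -> basic st gam v.
Proof.
move=> vv vw /basic_setE[wv ws ig we]; apply/basic_setE; rewrite vw.1.
by split=> //; apply: germ_eq_trans vw we.
Qed.

Lemma open_germ_eq U v w : open U -> valid v -> germ_equiv v w -> U w -> U v.
Proof.
by case=> _ oU vv vw /oU[st [gam [_ [_ [bw sub]]]]]; apply/sub/(basic_set_germ_eq vv vw bw).
Qed.

Lemma basic_open_nbhd t n : valid t ->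
  open (basic t.1 (ipath_prefix r t.2 n)) /\ basic t.1 (ipath_prefix r t.2 n) t.
Proof.
move=> vt; have bt : basic t.1 (ipath_prefix r t.2 n) t.
  apply/basic_setE; rewrite -surjective_pairing.
  by split=> //; [exact: inZ_ipath_prefix | exact: germ_eq_refl].
split=> //; split=> [v /basic_setE[] // | v bv].
exists t.1, (ipath_prefix r t.2 n); do !split=> //; first exact: vt.1.
exact: ok_path_prefix vt.2.1.
Qed.

Lemma separated_by_basic t u n : valid t -> valid u ->
  (forall v, basic t.1 (ipath_prefix r t.2 n) v ->
             basic u.1 (ipath_prefix r u.2 n) v -> False) ->
  exists U W, [/\ open U, open W, U t, W u & U `&` W = set0].
Proof.
move=> vt vu disj; have [oU Ut] := basic_open_nbhd n vt; have [oW Wu] := basic_open_nbhd n vu.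
exists (basic t.1 (ipath_prefix r t.2 n)), (basic u.1 (ipath_prefix r u.2 n)).
by split=> //; rewrite -subset0 => v [/disj].
Qed.

Lemma basic_set_near st gam t : basic st gam t -> exists n, forall z,
  ok_ipath r s z -> (forall i, i < n -> z i = t.2 i) -> basic st gam (t.1, z).
Proof.
move=> /basic_setE[vt vs ig /(germ_eqP _ vt)[_ [q Eq]]].
pose N := maxn q (maxn (size gam.2) (maxn (size st.2.2) (size t.1.2.2))).
exists N.+1 => z okz zt.
have near p : size p.2 <= N -> inZ r p t.2 -> inZ r p z.
  by move=> pN ip; apply: (inZ_eq ip) => i ip'; rewrite zt // ltnS (leq_trans ip').
have vz : valid (t.1, z).
  by split; [exact: vt.1 | split=> //; apply: near vt.2.2; rewrite /N /=; lia].
apply/basic_setE; split=> //=.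
- by split; [exact: vs.1 | split=> //; apply: near vs.2.2; rewrite /N /=; lia].
- by apply: near ig; rewrite /N /=; lia.
apply/germ_eqP => //; split=> //; exists q => /=.
have z0 : r (z 0) = r (t.2 0) by rewrite zt.
have zq i : i < q -> z i = t.2 i by move=> iq; apply: zt; rewrite /N /=; lia.
by rewrite !(eq_restrict _ z0 zq).
Qed.

Lemma open_near U t : open U -> U t -> exists n, forall z,
  ok_ipath r s z -> (forall i, i < n -> z i = t.2 i) -> U (t.1, z).
Proof.
case=> _ oU /oU[st [gam [_ [_ [bt sub]]]]]; have [n near] := basic_set_near bt.
by exists n => z okz zt; apply/sub/near.
Qed.

Definition vertex_elem (x : V) (g : G) : selem G V Ed := ((x, [::]), g, (x, [::])).

Lemma valid_vertex_germ x g z :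
  actV g x = x -> ok_ipath r s z -> r (z 0) = x -> valid (vertex_elem x g, z).
Proof. by move=> gx okz z0; do !split=> //; rewrite /fp_s /= gx. Qed.

Lemma restrict_vertex x g z q : r (z 0) = x ->
  restrict (vertex_elem x g) z q =
  Some ((x, aseq g (segment z 0 q)), pseq g (segment z 0 q), ipath_prefix r z q).
Proof. by move=> z0; rewrite restrict_long // /restrict_word /restrict_elt /= subn0. Qed.

Lemma germ_eq_vertexP x g z : valid (vertex_elem x g, z) ->
  germ_equiv (vertex_elem x g, z) (vertex_elem x 1%g, z) <->
  exists q, sfixed g (ipath_prefix r z q).
Proof.
move=> vt; have [[_ [_ /esym gx]] [_ [/= z0 _]]] := vt.
rewrite germ_eqP //=; split=> [[_ [q]] | [q [[_ fix_act] fix_phi]]].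
  rewrite !restrict_vertex // act_seq1 phi_seq1 => -[fix_act fix_phi].
  by exists q; split; rewrite /act_path /ipath_prefix /= ?z0 ?gx ?fix_act.
split=> //; exists q; rewrite !restrict_vertex // act_seq1 phi_seq1 fix_act.
by rewrite -fix_phi.
Qed.

Lemma restrict_eq_of_nearby a g b c h d xi :
  finitely_many_minimal_strongly_fixed r s actV actE phi -> inZ r b xi -> inZ r d xi ->
  exists n, forall z m, ok_ipath r s z -> (forall i, i < n -> z i = xi i) ->
    restrict (a, g, b) z m = restrict (c, h, d) z m ->
    exists q, restrict (a, g, b) xi q = restrict (c, h, d) xi q.
Proof.
move=> Hfin ib id.
pose M := maxn (size b.2) (size d.2).
have bM : size b.2 <= M := leq_maxl _ _.
have dM : size d.2 <= M := leq_maxr _ _.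
pose k := ((restrict_elt (c, h, d) xi M)^-1 * restrict_elt (a, g, b) xi M)%g.
have [L HL] :=
  finite_set_bounded (fun p : Defs.fpath V Ed => size p.2) (Hfin k (r (xi M))).
exists (M + L).+1 => z m okz zxi E.
have zxiM i : i < M -> z i = xi i by move=> iM; apply: zxi; lia.
have [ibz idz] : inZ r b z /\ inZ r d z.
  by split; [apply: (inZ_eq ib) | apply: (inZ_eq id)] => i ? ; rewrite zxi //; lia.
wlog mML : m E / M + L < m.
  move=> base; apply: (base (maxn m (M + L).+1)); last exact: leq_maxr.
  exact: (restrict_eq_mono (t := (a, g, b)) (u := (c, h, d)) ibz idz E (leq_maxl _ _)).
have [m' mM] : exists m', m - M = m'.+1 by exists (m - M).-1; lia.
have Mm : M <= m by lia.
case/(restrict_eq_split _ _ _ _ ibz idz bM dM Mm): E.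
rewrite (eq_restrict_word _ _ bM zxiM) (eq_restrict_word _ _ dM zxiM).
rewrite (eq_restrict_elt _ _ bM zxiM) (eq_restrict_elt _ _ dM zxiM) mM.
move=> e1 ew ea ep.
have sfW : sfixed k (r (xi M), segment z M m'.+1).
  by rewrite -zxi; [exact: strongly_fixed_of_eq_seqs ea ep | lia].
have okW : ok_path r s (r (xi M), segment z M m'.+1).
  by rewrite -zxi; [exact: chain_segment | lia].
have [j jm' msf] := minimal_strongly_fixed_prefix okW sfW.
rewrite /= size_segment in jm'.
have jL : j <= L.
  have := HL (_, take j (segment z M m'.+1)) (conj erefl msf).
  by rewrite /= size_takel ?size_segment.
have Ej : take j (segment z M m'.+1) = segment xi M j.
  rewrite take_segment //; apply: eq_segment => i iMj; apply: zxi; lia.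
rewrite /= Ej in msf; have [fa fp] := eq_seqs_of_strongly_fixed msf.2.1.
exists (M + j); apply/(restrict_eq_split _ _ _ _ ib id bM dM (leq_addr j M)).
by rewrite addKn; split.
Qed.

Lemma hausdorff_of_finitely_many_msf :
  finitely_many_minimal_strongly_fixed r s actV actE phi ->
  tight_groupoid_hausdorff r s actV actE phi.
Proof.
move=> Hfin [[[a g] b] xi] [[[c h] d] mu] vt vu ntu.
have [xi_mu | xi_mu] := pselect (xi = mu); last first.
  have [i ne] : exists i, xi i <> mu i by apply/existsNP => eq; apply/xi_mu/funext.
  apply: (separated_by_basic (n := i.+1) vt vu).
  move=> v /basic_setE[_ _ /inZ_ipath_prefix_agree zt _].
  move=> /basic_setE[_ _ /inZ_ipath_prefix_agree zu _].
  by apply: ne; rewrite -[xi i]/((a, g, b, xi).2 i) -(zt i) // (zu i).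
subst mu; have [n near] := restrict_eq_of_nearby a g c h Hfin vt.2.2 vu.2.2.
apply: (separated_by_basic (n := n) vt vu).
move=> v /basic_setE[vv vtv iz tv] /basic_setE[_ vuv _ uv].
apply: ntu; apply/germ_eqP => //; split=> //.
have /(germ_eqP _ vtv)[_ [m E]] : germ_equiv ((a, g, b), v.2) ((c, h, d), v.2).
  exact: germ_eq_trans vtv vv vuv (germ_eq_sym tv) uv.
exact: near vv.2.1 (inZ_ipath_prefix_agree iz) E.
Qed.

Lemma finitely_many_msf_of_hausdorff : row_finite_no_sources r ->
  tight_groupoid_hausdorff r s actV actE phi ->
  finitely_many_minimal_strongly_fixed r s actV actE phi.
Proof.
move=> Hrf Haus g x; apply: contrapT => infF.
have F_paths p : fp_r p = x /\ msfixed g p -> p.1 = x /\ ok_path r s p by case=> px [].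
have [eta [okE eta0 long]] := konig Hrf F_paths infF.
have gx : actV g x = x.
  by have [p [[px [_ [[/(congr1 fst) /= fix_x _] _]]] _ _]] := long 0; rewrite -px.
have not_fixed n : ~ sfixed g (ipath_prefix r eta n).
  have [p [[px [_ [_ minp]]] lt take_n]] := long n.
  by rewrite /ipath_prefix eta0 -take_n -px; apply: minp.
have vt := valid_vertex_germ gx okE eta0.
have vu := valid_vertex_germ (actV1 x) okE eta0.
have [|U [W [oU oW Ut Wu UW]]] := Haus _ _ vt vu.
  by case/(germ_eq_vertexP vt) => q; apply: not_fixed.
have [n1 nearU] := open_near oU Ut; have [n2 nearW] := open_near oW Wu.
have [p [[px [okp [fix_p _]]] lt take_n]] := long (maxn n1 n2).
have [z [okz zp]] := extend_to_ipath (fun y => (Hrf y).2) okp.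
have z0 : r (z 0) = x by rewrite -px -zp.
have z_eta i : i < maxn n1 n2 -> z i = eta i.
  apply: segment0_inj; rewrite -take_n -(take_segment z 0 (ltnW lt)).
  by rewrite -[segment z 0 _]/(ipath_prefix r z (size p.2)).2 zp.
have vz := valid_vertex_germ gx okz z0.
have Uz : U (vertex_elem x g, z).
  by apply: nearU => // i lt1; apply: z_eta; rewrite (leq_trans lt1) ?leq_maxl.
have Wz : W (vertex_elem x 1%g, z).
  by apply: nearW => // i lt2; apply: z_eta; rewrite (leq_trans lt2) ?leq_maxr.
have gz : germ_equiv (vertex_elem x g, z) (vertex_elem x 1%g, z).
  by apply/(germ_eq_vertexP vz); exists (size p.2); rewrite zp.
have : (U `&` W) (vertex_elem x g, z) by split=> //; exact: open_germ_eq oW vz gz Wz.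
by rewrite UW.
Qed.

End TightGroupoid.

Theorem theorem4p2 (G : groupType) (V Ed : countType) (r s : Ed -> V)
    (actV : G -> V -> V) (actE : G -> Ed -> Ed) (phi : G -> Ed -> G) :
  row_finite_no_sources r ->
  graph_action r s actV actE ->
  cocycle actE phi ->
  cocycle_vertex_cond actV phi ->
  (finitely_many_minimal_strongly_fixed r s actV actE phi <->
   tight_groupoid_hausdorff r s actV actE phi).
Proof.
move=> Hrf Hga Hco _; split.
  exact: hausdorff_of_finitely_many_msf.
exact: finitely_many_msf_of_hausdorff.
Qed.
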